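(* Let $\lambda_a,\lambda_b\in\{1,2\}$ and let $u,t,v,w$ be integers such that $(u,t)$ satisfies $S_{\lambda_a,\lambda_b}$ and $u\cdot(vw)=t^3+t^{\lambda_a}+1$ (i.e. $u,t,vw$ are, in that order, three consecutive terms of $\langle u,t\rangle_{S_{\lambda_a,\lambda_b}}=\langle t,vw\rangle_{S_{3-\lambda_b,\lambda_a}}$). Then $(v,t)$ satisfies $S_{\lambda_a,\lambda_b}$ (i.e. $v,t,uw$ are, in that order, three consecutive terms of $\langle v,t\rangle_{S_{\lambda_a,\lambda_b}}=\langle t,uw\rangle_{S_{3-\lambda_b,\lambda_a}}$) if and only if $$t\mid (u-v)(u^2+uv+v^2+1)\quad\text{when }\lambda_b=1,$$ $$t\mid (u-v)\big((uw)^2+(uw)(vw)+(vw)^2+1\big)\quad\text{when }\lambda_b=2.$$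
   Context: For $\lambda_a,\lambda_b\in\{1,2\}$, a pair of integers $(x,y)$ satisfies the system $S_{\lambda_a,\lambda_b}$ if $x\mid y^3+y^{\lambda_a}+1$ and $y\mid x^3+x^{\lambda_b}+1$. For such a pair, $\langle x,y\rangle_{S_{\lambda_a,\lambda_b}}$ denotes the bi-infinite integer sequence $(u_n)$ with $u_0=x$, $u_1=y$ and $u_{n-1}u_{n+1}=u_n^3+u_n^{e_n}+1$ for all $n$, where $e_n$ has period 4 with $(e_0,e_1,e_2,e_3)=(\lambda_b,\lambda_a,3-\lambda_b,3-\lambda_a)$; sequences are identified up to shift and reversal of indices. ''$u,t,s$, in that order, are three consecutive terms of $\langle u,t\rangle_{S_{\lambda_a,\lambda_b}}$'' means $(u,t)$ satisfies $S_{\lambda_a,\lambda_b}$ and $us=t^3+t^{\lambda_a}+1$; then $(t,s)$ satisfies $S_{3-\lambda_b,\lambda_a}$. *)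

From Stdlib Require Import ZArith.
Open Scope Z_scope.

Definition satS (la lb : Z) (x y : Z) : Prop :=
  (x | y ^ 3 + y ^ la + 1) /\ (y | x ^ 3 + x ^ lb + 1).

From Stdlib Require Import ZArith.
Open Scope Z_scope.

(* Write [x ~ y] for [x = y] modulo [t].  Since [t | t^3 + t^la], the
   hypothesis [u (vw) = t^3 + t^la + 1] says [u (vw) ~ 1], and [v] divides
   [t^3 + t^la + 1] for free, so only [t | v^3 + v^lb + 1] is at stake.
   For [lb = 1] this differs from [u^3 + u + 1 ~ 0] by [(u - v)(u^2 + uv + v^2 + 1)].
   For [lb = 2], multiplying by the cube of an inverse shows that
   [x^3 + x^2 + 1 ~ 0] iff [y^3 + y + 1 ~ 0] whenever [xy ~ 1]; applied to
   [(u, vw)] and [(v, uw)] this reduces the claim to the [lb = 1]-type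
   difference of [uw] and [vw], which is [w] times the stated product, and
   [w] is invertible modulo [t]. *)

Lemma Zdivide_congr_iff (t a b : Z) : (t | a - b) -> ((t | a) <-> (t | b)).
Proof.
  intros Hab; split; intros H.
  - replace b with (a - (a - b)) by ring. now apply Z.divide_sub_r.
  - replace a with ((a - b) + b) by ring. now apply Z.divide_add_r.
Qed.

Lemma Zdivide_sub_cancel_l_iff (t a b : Z) : (t | a) -> ((t | a - b) <-> (t | b)).
Proof.
  intros Ha; split; intros H.
  - replace b with (a - (a - b)) by ring. now apply Z.divide_sub_r.
  - now apply Z.divide_sub_r.
Qed.

Lemma Zdivide_sub_cancel_r_iff (t a b : Z) : (t | b) -> ((t | a - b) <-> (t | a)).
Proof.
  intros Hb; split; intros H.
  - replace a with ((a - b) + b) by ring. now apply Z.divide_add_r.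
  - now apply Z.divide_sub_r.
Qed.

Lemma Zdivide_mul_unit_l_iff (t a b x : Z) :
  (t | a * b - 1) -> ((t | a * x) <-> (t | x)).
Proof.
  intros Hunit; split; intros H.
  - replace x with (b * (a * x) - x * (a * b - 1)) by ring.
    apply Z.divide_sub_r; [apply Z.divide_mul_r | apply Z.divide_mul_r]; assumption.
  - now apply Z.divide_mul_r.
Qed.

Lemma cubic_diff (x y : Z) :
  (x ^ 3 + x + 1) - (y ^ 3 + y + 1) = (x - y) * (x ^ 2 + x * y + y ^ 2 + 1).
Proof. ring. Qed.

Lemma Zdivide_cubic_inverse_iff (t x y : Z) :
  (t | x * y - 1) -> ((t | x ^ 3 + x ^ 2 + 1) <-> (t | y ^ 3 + y + 1)).
Proof.
  intros Hxy.
  rewrite <- (Zdivide_mul_unit_l_iff t (y ^ 3) (x ^ 3)) by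
    (replace (y ^ 3 * x ^ 3 - 1) with ((x * y - 1) * ((x * y) ^ 2 + x * y + 1)) by ring;
     now apply Z.divide_mul_l).
  apply Zdivide_congr_iff.
  replace (y ^ 3 * (x ^ 3 + x ^ 2 + 1) - (y ^ 3 + y + 1))
    with ((x * y - 1) * ((x * y) ^ 2 + x * y + 1 + y * (x * y + 1))) by ring.
  now apply Z.divide_mul_l.
Qed.

Theorem theorem11 (la lb u t v w : Z) :
  (la = 1 \/ la = 2) -> (lb = 1 \/ lb = 2) ->
  satS la lb u t ->
  u * (v * w) = t ^ 3 + t ^ la + 1 ->
  (satS la lb v t <->
     ((lb = 1 -> (t | (u - v) * (u ^ 2 + u * v + v ^ 2 + 1))) /\
      (lb = 2 -> (t | (u - v) * ((u * w) ^ 2 + (u * w) * (v * w) + (v * w) ^ 2 + 1))))).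
Proof.
  intros Hla Hlb [_ Hu] E.
  assert (Hinv : (t | u * (v * w) - 1)).
  { rewrite E; destruct Hla as [-> | ->]; [exists (t ^ 2 + 1) | exists (t ^ 2 + t)]; ring. }
  assert (Hv : (v | t ^ 3 + t ^ la + 1)) by (rewrite <- E; exists (u * w); ring).
  assert (Hsat : satS la lb v t <-> (t | v ^ 3 + v ^ lb + 1)) by (unfold satS; tauto).
  rewrite Hsat.
  destruct Hlb as [-> | ->]; rewrite ?Z.pow_1_r in Hu |- *.
  - rewrite <- cubic_diff, (Zdivide_sub_cancel_l_iff _ _ _ Hu).
    split; [intros H; split; [auto | discriminate] | intros [H _]; auto].
  - rewrite (Zdivide_cubic_inverse_iff t v (u * w))
      by (replace (v * (u * w) - 1) with (u * (v * w) - 1) by ring; exact Hinv).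
    rewrite <- (Zdivide_sub_cancel_r_iff t _ ((v * w) ^ 3 + v * w + 1))
      by (apply (Zdivide_cubic_inverse_iff t u (v * w) Hinv); exact Hu).
    replace ((u * w) ^ 3 + u * w + 1 - ((v * w) ^ 3 + v * w + 1))
      with (w * ((u - v) * ((u * w) ^ 2 + (u * w) * (v * w) + (v * w) ^ 2 + 1))) by ring.
    rewrite (Zdivide_mul_unit_l_iff t w (u * v))
      by (replace (w * (u * v) - 1) with (u * (v * w) - 1) by ring; exact Hinv).
    split; [intros H; split; [discriminate | auto] | intros [_ H]; auto].
Qed.
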